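(* Let $M(C,\bar\xi,\pi)$ be a Myller configuration with Darboux frame $(\bar\xi,\bar\mu,\bar v)$ and invariants $G,K,T$, $(G,T)\neq(0,0)$ everywhere, and suppose $C$ is a $\bar\mu$-helix with fixed unit axis $\bar d_\mu$ and constant angle $\eta$, $\langle\bar\mu,\bar d_\mu\rangle=\cos\eta$. Then, for one choice of sign, $$\bar d_\mu=\mp\sin\eta\frac{T}{\sqrt{G^2+T^2}}\bar\xi+(\cos\eta)\bar\mu\mp\sin\eta\frac{G}{\sqrt{G^2+T^2}}\bar v.$$
   Context: Let $C$ be a smooth curve in $E^3$ parametrized by arclength $s$; primes denote $d/ds$. A Myller configuration $M(C,\bar\xi,\pi)$ consists of a smooth unit vector field $\bar\xi$ along $C$ and a smooth oriented plane field $\pi$ with $\bar\xi\in\pi$; $\bar v$ is the unit normal of $\pi$, $\bar\mu=\bar v\times\bar\xi$, and $\bar\xi'=G\bar\mu+K\bar v$, $\bar\mu'=-G\bar\xi+T\bar v$, $\bar v'=-K\bar\xi-T\bar\mu$. $C$ is a $\bar\mu$-helix if there are a constant unit vector $\bar d_\mu$ (axis) and a constant $\eta$ with $\langle\bar\mu,\bar d_\mu\rangle=\cos\eta$ along $C$. *)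

From Stdlib Require Import Reals.
From Coquelicot Require Import Coquelicot.
Open Scope R_scope.

Definition vec : Type := (R * R * R)%type.
Definition vx (u : vec) : R := fst (fst u).
Definition vy (u : vec) : R := snd (fst u).
Definition vz (u : vec) : R := snd u.
Definition mkv (a b c : R) : vec := (a, b, c).

Definition vadd (u w : vec) : vec := mkv (vx u + vx w) (vy u + vy w) (vz u + vz w).
Definition vscale (k : R) (u : vec) : vec := mkv (k * vx u) (k * vy u) (k * vz u).
Definition dot (u w : vec) : R := vx u * vx w + vy u * vy w + vz u * vz w.
Definition cross (u w : vec) : vec :=
  mkv (vy u * vz w - vz u * vy w) (vz u * vx w - vx u * vz w) (vx u * vy w - vy u * vx w).

Definition in_I (a b : Rbar) (s : R) : Prop := Rbar_lt a s /\ Rbar_lt s b.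

Definition smooth_on (a b : Rbar) (f : R -> R) : Prop :=
  forall (n : nat) (s : R), in_I a b s -> ex_derive (Derive_n f n) s.

Definition vsmooth_on (a b : Rbar) (F : R -> vec) : Prop :=
  smooth_on a b (fun s => vx (F s)) /\ smooth_on a b (fun s => vy (F s)) /\
  smooth_on a b (fun s => vz (F s)).

Definition is_vderive (F : R -> vec) (s : R) (F' : vec) : Prop :=
  is_derive (fun t => vx (F t)) s (vx F') /\
  is_derive (fun t => vy (F t)) s (vy F') /\
  is_derive (fun t => vz (F t)) s (vz F').

Definition myller_config (a b : Rbar) (C xi mu v : R -> vec) (G K T : R -> R) : Prop :=
  vsmooth_on a b C /\ vsmooth_on a b xi /\ vsmooth_on a b v /\
  (forall s, in_I a b s ->
     (exists C', is_vderive C s C' /\ dot C' C' = 1) /\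
     dot (xi s) (xi s) = 1 /\ dot (v s) (v s) = 1 /\ dot (xi s) (v s) = 0 /\
     mu s = cross (v s) (xi s) /\
     is_vderive xi s (vadd (vscale (G s) (mu s)) (vscale (K s) (v s))) /\
     is_vderive mu s (vadd (vscale (- G s) (xi s)) (vscale (T s) (v s))) /\
     is_vderive v s (vadd (vscale (- K s) (xi s)) (vscale (- T s) (mu s)))).

Definition mu_helix (a b : Rbar) (mu : R -> vec) (d : vec) (eta : R) : Prop :=
  dot d d = 1 /\ forall s, in_I a b s -> dot (mu s) d = cos eta.

From Stdlib Require Import Reals Lra Psatz Classical_Prop.
From Coquelicot Require Import Coquelicot.
Open Scope R_scope.

(* Write d = α ξ + β μ + γ v in the Darboux frame.  The helix condition gives
   β = cos η, and differentiating <μ, d> = cos η gives -G α + T γ = 0, so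
   (α, γ) = λ (T, G) / sqrt (G² + T²) with λ² = α² + γ² = sin² η since |d| = 1.
   It remains to see that λ is constant: λ sqrt (G² + T²) = α T + γ G is
   continuous (G = <ξ', μ> and T = -<v', μ> inherit continuity from the
   smoothness of ξ and v) and vanishes nowhere when sin η <> 0, so by the
   intermediate value theorem it has constant sign on the interval, and λ,
   whose square is constant, is constant. *)

Ltac destruct_vecs :=
  repeat match goal with u : vec |- _ => destruct u as [[? ?] ?] end.
Ltac unfold_vec := unfold dot, cross, vadd, vscale, mkv, vx, vy, vz; simpl.

Lemma dot_comm u w : dot u w = dot w u.
Proof. unfold dot; ring. Qed.

Lemma dot_vaddl u w z : dot (vadd u w) z = dot u z + dot w z.
Proof. destruct_vecs; unfold_vec; ring. Qed.

Lemma dot_vscalel k u w : dot (vscale k u) w = k * dot u w.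
Proof. destruct_vecs; unfold_vec; ring. Qed.

Lemma dot_cross_orthl u w : dot u (cross u w) = 0.
Proof. destruct_vecs; unfold_vec; ring. Qed.

Lemma dot_cross_orthr u w : dot w (cross u w) = 0.
Proof. destruct_vecs; unfold_vec; ring. Qed.

Lemma lagrange_identity u w :
  dot (cross u w) (cross u w) = dot u u * dot w w - dot u w ^ 2.
Proof. destruct_vecs; unfold_vec; ring. Qed.

Lemma cross_crossl u w z :
  cross (cross u w) z = vadd (vscale (dot u z) w) (vscale (- dot w z) u).
Proof. destruct_vecs; unfold_vec; f_equal; [f_equal|]; ring. Qed.

Lemma dot_self_eq0 w : dot w w = 0 -> w = mkv 0 0 0.
Proof.
  destruct_vecs; unfold_vec; intro H.
  f_equal; [f_equal|]; nra.
Qed.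

Lemma orthonormal_frame_ext x v p q :
  dot x x = 1 -> dot v v = 1 -> dot x v = 0 ->
  dot p x = dot q x -> dot p (cross v x) = dot q (cross v x) -> dot p v = dot q v ->
  p = q.
Proof.
  intros Hx Hv Hxv Ex Em Ev.
  set (w := vadd p (vscale (-1) q)).
  assert (Hw : forall y, dot w y = dot p y - dot q y).
  { intro y. unfold w. rewrite dot_vaddl, dot_vscalel. ring. }
  assert (Hmm : dot (cross v x) (cross v x) = 1).
  { rewrite lagrange_identity, Hx, Hv, dot_comm, Hxv. ring. }
  (* (v × x) × w = (v·w) x - (x·w) v vanishes, and Lagrange's identity
     then forces |w|² = 0 *)
  assert (Hmw : cross (cross v x) w = vadd (vscale 0 x) (vscale 0 v)).
  { rewrite cross_crossl, (dot_comm v w), (dot_comm x w), !Hw, Ev, Ex.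
    do 2 f_equal; ring. }
  assert (Hww : dot w w = 0).
  { pose proof (lagrange_identity (cross v x) w) as L.
    rewrite Hmw, dot_vaddl, !dot_vscalel, Hmm, (dot_comm (cross v x) w), (Hw (cross v x)), Em in L.
    lra. }
  apply dot_self_eq0 in Hww. unfold w in Hww.
  destruct_vecs. unfold vadd, vscale, mkv, vx, vy, vz in Hww; simpl in Hww.
  injection Hww as H1 H2 H3.
  f_equal; [f_equal|]; lra.
Qed.

Lemma orthonormal_frame_decomposition x v d :
  dot x x = 1 -> dot v v = 1 -> dot x v = 0 ->
  d = vadd (vadd (vscale (dot d x) x) (vscale (dot d (cross v x)) (cross v x)))
           (vscale (dot d v) v).
Proof.
  intros Hx Hv Hxv.
  assert (Hmm : dot (cross v x) (cross v x) = 1).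
  { rewrite lagrange_identity, Hx, Hv, dot_comm, Hxv. ring. }
  assert (Hmx : dot (cross v x) x = 0) by (rewrite dot_comm; apply dot_cross_orthr).
  assert (Hmv : dot (cross v x) v = 0) by (rewrite dot_comm; apply dot_cross_orthl).
  assert (Hxm : dot x (cross v x) = 0) by apply dot_cross_orthr.
  assert (Hvm : dot v (cross v x) = 0) by apply dot_cross_orthl.
  assert (Hvx : dot v x = 0) by (rewrite dot_comm; exact Hxv).
  apply (orthonormal_frame_ext x v _ _ Hx Hv Hxv); rewrite !dot_vaddl, !dot_vscalel.
  - rewrite Hx, Hmx, Hvx. ring.
  - rewrite Hxm, Hmm, Hvm. ring.
  - rewrite Hxv, Hmv, Hv. ring.
Qed.

Lemma sqrt_sum_sqr_pos G T : (G, T) <> (0, 0) -> 0 < sqrt (G ^ 2 + T ^ 2).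
Proof.
  intro HGT. apply sqrt_lt_R0.
  destruct (Req_dec G 0) as [->|HG]; [destruct (Req_dec T 0) as [->|HT]|].
  - congruence.
  - nra.
  - nra.
Qed.

Lemma proportional_decomposition G T al ga :
  (G, T) <> (0, 0) -> G * al = T * ga ->
  al = (al * T + ga * G) / sqrt (G ^ 2 + T ^ 2) * (T / sqrt (G ^ 2 + T ^ 2)) /\
  ga = (al * T + ga * G) / sqrt (G ^ 2 + T ^ 2) * (G / sqrt (G ^ 2 + T ^ 2)) /\
  ((al * T + ga * G) / sqrt (G ^ 2 + T ^ 2)) ^ 2 = al ^ 2 + ga ^ 2.
Proof.
  intros HGT Hpar.
  pose proof (sqrt_sum_sqr_pos G T HGT) as HN.
  assert (HN2 : sqrt (G ^ 2 + T ^ 2) ^ 2 = G ^ 2 + T ^ 2)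
    by (apply pow2_sqrt; nra).
  set (N := sqrt (G ^ 2 + T ^ 2)) in *.
  repeat split; field_simplify_eq; try lra; rewrite HN2.
  - replace (al * (G ^ 2 + T ^ 2)) with (G * (G * al) + al * T ^ 2) by ring.
    rewrite Hpar. ring.
  - replace (ga * (G ^ 2 + T ^ 2)) with (T * (T * ga) + ga * G ^ 2) by ring.
    rewrite <- Hpar. ring.
  - assert (E : (G * al - T * ga) ^ 2 = 0) by (rewrite Hpar; ring).
    nra.
Qed.


Lemma sqr_eq_sign c S : c ^ 2 = S ^ 2 -> exists eps, (eps = 1 \/ eps = -1) /\ c = - eps * S.
Proof.
  intro H.
  assert (F : (c - S) * (c + S) = 0) by nra.
  apply Rmult_integral in F as [F|F].
  - exists (-1). split; [right; reflexivity | lra].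
  - exists 1. split; [left; reflexivity | lra].
Qed.

Lemma in_I_locally a b s : in_I a b s -> locally s (in_I a b).
Proof. exact (open_and _ _ (open_Rbar_gt a) (open_Rbar_lt b) s). Qed.

Lemma in_I_between a b s1 s2 x :
  in_I a b s1 -> in_I a b s2 -> s1 <= x <= s2 -> in_I a b x.
Proof.
  intros [H1 _] [_ H2] [Hx1 Hx2]. split.
  - apply Rbar_lt_le_trans with (Finite s1); assumption.
  - apply Rbar_le_lt_trans with (Finite s2); assumption.
Qed.

Lemma continuous_nonzero_sign_const a b f :
  (forall t, in_I a b t -> continuous f t) -> (forall t, in_I a b t -> f t <> 0) ->
  forall s1 s2, in_I a b s1 -> in_I a b s2 -> 0 < f s1 * f s2.
Proof.
  intros Hc Hn.
  assert (Hlt : forall s1 s2, s1 < s2 -> in_I a b s1 -> in_I a b s2 -> 0 < f s1 * f s2).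
  { intros s1 s2 Hs H1 H2.
    pose proof (Hn s1 H1) as N1. pose proof (Hn s2 H2) as N2.
    destruct (Rlt_or_le 0 (f s1 * f s2)) as [Hpos|Hneg]; [exact Hpos|exfalso].
    (* t |-> f s2 * f t is negative at s1 and positive at s2 *)
    destruct (Ranalysis5.IVT_interv (fun t => f s2 * f t) s1 s2) as [z [Hz Hfz]].
    - intros t Ht. apply continuity_pt_filterlim.
      exact (continuous_mult (fun _ => f s2) f t (continuous_const _ t)
               (Hc t (in_I_between a b s1 s2 t H1 H2 Ht))).
    - exact Hs.
    - assert (f s1 * f s2 <> 0) by (apply Rmult_integral_contrapositive; auto). nra.
    - nra.
    - apply Rmult_integral in Hfz as [Hfz|Hfz]; [exact (N2 Hfz)|].
      exact (Hn z (in_I_between a b s1 s2 z H1 H2 Hz) Hfz). }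
  intros s1 s2 H1 H2.
  destruct (Rtotal_order s1 s2) as [Hs|[<-|Hs]].
  - auto.
  - pose proof (Hn s1 H1). nra.
  - rewrite Rmult_comm. auto.
Qed.

Definition vcontinuous (F : R -> vec) (t : R) : Prop :=
  continuous (fun s => vx (F s)) t /\ continuous (fun s => vy (F s)) t /\
  continuous (fun s => vz (F s)) t.

Definition vDerive (F : R -> vec) (t : R) : vec :=
  mkv (Derive (fun s => vx (F s)) t) (Derive (fun s => vy (F s)) t)
      (Derive (fun s => vz (F s)) t).

Lemma is_vderive_vDerive F s F' : is_vderive F s F' -> vDerive F s = F'.
Proof.
  intros [H1 [H2 H3]]. unfold vDerive.
  apply is_derive_unique in H1, H2, H3. simpl in H1, H2, H3.
  rewrite H1, H2, H3.
  destruct_vecs. reflexivity.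
Qed.

Lemma is_vderive_vcontinuous F s F' : is_vderive F s F' -> vcontinuous F s.
Proof.
  intros [H1 [H2 H3]].
  split; [|split]; apply (ex_derive_continuous (K := R_AbsRing) (V := R_NormedModule));
    eexists; eassumption.
Qed.

Lemma vsmooth_on_vcontinuous_vDerive a b F t :
  vsmooth_on a b F -> in_I a b t -> vcontinuous (vDerive F) t.
Proof.
  intros [H1 [H2 H3]] Ht.
  split; [|split]; apply (ex_derive_continuous (K := R_AbsRing) (V := R_NormedModule));
    [exact (H1 1%nat t Ht) | exact (H2 1%nat t Ht) | exact (H3 1%nat t Ht)].
Qed.

Lemma vcontinuous_const u t : vcontinuous (fun _ => u) t.
Proof. split; [|split]; apply continuous_const. Qed.

Lemma continuous_dot F H t :
  vcontinuous F t -> vcontinuous H t -> continuous (fun s => dot (F s) (H s)) t.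
Proof.
  intros [F1 [F2 F3]] [H1 [H2 H3]]. unfold dot.
  repeat apply (continuous_plus (V := R_NormedModule));
    apply (continuous_mult (K := R_AbsRing)); assumption.
Qed.

Lemma is_derive_dot_r F s F' d :
  is_vderive F s F' -> is_derive (fun t => dot (F t) d) s (dot F' d).
Proof.
  intros [H1 [H2 H3]]. unfold dot.
  repeat apply (is_derive_plus (K := R_AbsRing) (V := R_NormedModule));
    apply (is_derive_scal_l (K := R_AbsRing) (V := R_NormedModule)); assumption.
Qed.

Lemma is_derive_const_on a b f c s l :
  in_I a b s -> (forall t, in_I a b t -> f t = c) -> is_derive f s l -> l = 0.
Proof.
  intros Hs Hf Hd.
  assert (H0 : is_derive f s 0).
  { apply (is_derive_ext_loc (fun _ => c)).
    - apply (filter_imp (in_I a b)); [|exact (in_I_locally a b s Hs)].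
      intros t Ht. symmetry. auto.
    - exact (is_derive_const (K := R_AbsRing) (V := R_NormedModule) c s). }
  rewrite <- (is_derive_unique _ _ _ Hd). exact (is_derive_unique _ _ _ H0).
Qed.

Section MuHelix.

Variables (a b : Rbar) (C xi mu v : R -> vec) (G K T : R -> R) (d : vec) (eta : R).
Hypothesis config : myller_config a b C xi mu v G K T.
Hypothesis GT_neq0 : forall s, in_I a b s -> (G s, T s) <> (0, 0).
Hypothesis helix : mu_helix a b mu d eta.

Lemma darboux_frame s : in_I a b s ->
  dot (xi s) (xi s) = 1 /\ dot (v s) (v s) = 1 /\ dot (xi s) (v s) = 0 /\
  mu s = cross (v s) (xi s).
Proof.
  intro Hs. destruct config as [_ [_ [_ Hpt]]].
  destruct (Hpt s Hs) as [_ [Hx [Hv [Hxv [Hmu _]]]]]. auto.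
Qed.

Lemma darboux_mu s : in_I a b s ->
  dot (mu s) (mu s) = 1 /\ dot (xi s) (mu s) = 0 /\ dot (v s) (mu s) = 0.
Proof.
  intro Hs. destruct (darboux_frame s Hs) as [Hx [Hv [Hxv ->]]].
  split; [|split].
  - rewrite lagrange_identity, Hx, Hv, dot_comm, Hxv. ring.
  - apply dot_cross_orthr.
  - apply dot_cross_orthl.
Qed.

Lemma G_eq_dot s : in_I a b s -> G s = dot (vDerive xi s) (mu s).
Proof.
  intro Hs. destruct config as [_ [_ [_ Hpt]]].
  destruct (Hpt s Hs) as [_ [_ [_ [_ [_ [Dxi _]]]]]].
  destruct (darboux_mu s Hs) as [Hmm [_ Hvm]].
  rewrite (is_vderive_vDerive _ _ _ Dxi), dot_vaddl, !dot_vscalel, Hmm, Hvm. ring.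
Qed.

Lemma T_eq_dot s : in_I a b s -> T s = - dot (vDerive v s) (mu s).
Proof.
  intro Hs. destruct config as [_ [_ [_ Hpt]]].
  destruct (Hpt s Hs) as [_ [_ [_ [_ [_ [_ [_ Dv]]]]]]].
  destruct (darboux_mu s Hs) as [Hmm [Hxm _]].
  rewrite (is_vderive_vDerive _ _ _ Dv), dot_vaddl, !dot_vscalel, Hmm, Hxm. ring.
Qed.

Lemma vcontinuous_mu t : in_I a b t -> vcontinuous mu t.
Proof.
  intro Ht. destruct config as [_ [_ [_ Hpt]]].
  destruct (Hpt t Ht) as [_ [_ [_ [_ [_ [_ [Dmu _]]]]]]].
  exact (is_vderive_vcontinuous _ _ _ Dmu).
Qed.

Lemma continuous_G t : in_I a b t -> continuous G t.
Proof.
  intro Ht. destruct config as [_ [Hxi _]].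
  apply (continuous_ext_loc _ (fun s => dot (vDerive xi s) (mu s))).
  - apply (filter_imp (in_I a b)); [|exact (in_I_locally a b t Ht)].
    intros s Hs. symmetry. exact (G_eq_dot s Hs).
  - exact (continuous_dot _ _ t (vsmooth_on_vcontinuous_vDerive a b xi t Hxi Ht)
             (vcontinuous_mu t Ht)).
Qed.

Lemma continuous_T t : in_I a b t -> continuous T t.
Proof.
  intro Ht. destruct config as [_ [_ [Hv _]]].
  apply (continuous_ext_loc _ (fun s => - dot (vDerive v s) (mu s))).
  - apply (filter_imp (in_I a b)); [|exact (in_I_locally a b t Ht)].
    intros s Hs. symmetry. exact (T_eq_dot s Hs).
  - apply (continuous_opp (V := R_NormedModule)).
    exact (continuous_dot _ _ t (vsmooth_on_vcontinuous_vDerive a b v t Hv Ht)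
             (vcontinuous_mu t Ht)).
Qed.

Lemma continuous_dot_axis F t : vcontinuous F t -> continuous (fun s => dot d (F s)) t.
Proof. intro HF. exact (continuous_dot _ _ t (vcontinuous_const d t) HF). Qed.

Lemma helix_axis_decomposition s : in_I a b s ->
  d = vadd (vadd (vscale (dot d (xi s)) (xi s)) (vscale (cos eta) (mu s)))
           (vscale (dot d (v s)) (v s)).
Proof.
  intro Hs. destruct helix as [_ Hangle].
  destruct (darboux_frame s Hs) as [Hx [Hv [Hxv Hmu]]].
  rewrite <- (Hangle s Hs), (dot_comm (mu s) d), Hmu.
  exact (orthonormal_frame_decomposition _ _ d Hx Hv Hxv).
Qed.

Lemma helix_axis_sin s : in_I a b s ->
  dot d (xi s) ^ 2 + dot d (v s) ^ 2 = sin eta ^ 2.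
Proof.
  intro Hs. destruct helix as [Hdd Hangle].
  assert (E : dot d d = dot d (xi s) ^ 2 + cos eta ^ 2 + dot d (v s) ^ 2).
  { rewrite (helix_axis_decomposition s Hs) at 2.
    rewrite (dot_comm d), !dot_vaddl, !dot_vscalel, (Hangle s Hs), !(dot_comm _ d).
    ring. }
  pose proof (sin2_cos2 eta) as SC. unfold Rsqr in SC. nra.
Qed.

Lemma helix_axis_orth s : in_I a b s -> G s * dot d (xi s) = T s * dot d (v s).
Proof.
  intro Hs. destruct helix as [_ Hangle]. destruct config as [_ [_ [_ Hpt]]].
  destruct (Hpt s Hs) as [_ [_ [_ [_ [_ [_ [Dmu _]]]]]]].
  pose proof (is_derive_const_on a b _ _ s _ Hs Hangle (is_derive_dot_r _ _ _ d Dmu)) as E.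
  rewrite dot_vaddl, !dot_vscalel, !(dot_comm _ d) in E. lra.
Qed.

Definition axis_coeff s : R :=
  (dot d (xi s) * T s + dot d (v s) * G s) / sqrt (G s ^ 2 + T s ^ 2).

Lemma axis_coeff_sqr s : in_I a b s -> axis_coeff s ^ 2 = sin eta ^ 2.
Proof.
  intro Hs. rewrite <- (helix_axis_sin s Hs).
  apply (proportional_decomposition (G s) (T s)); [apply GT_neq0 | apply helix_axis_orth]; exact Hs.
Qed.

Lemma axis_coeff_eq s0 s : sin eta <> 0 -> in_I a b s0 -> in_I a b s ->
  axis_coeff s = axis_coeff s0.
Proof.
  intros S0 Hs0 Hs.
  set (h t := dot d (xi t) * T t + dot d (v t) * G t).
  assert (Hh : forall t, in_I a b t -> h t = axis_coeff t * sqrt (G t ^ 2 + T t ^ 2)).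
  { intros t Ht. pose proof (sqrt_sum_sqr_pos _ _ (GT_neq0 t Ht)).
    unfold h, axis_coeff. field. lra. }
  assert (Hcont : forall t, in_I a b t -> continuous h t).
  { intros t Ht. destruct config as [_ [_ [_ Hpt]]].
    destruct (Hpt t Ht) as [_ [_ [_ [_ [_ [Dxi [_ Dv]]]]]]].
    apply (continuous_plus (V := R_NormedModule));
      apply (continuous_mult (K := R_AbsRing)).
    - exact (continuous_dot_axis xi t (is_vderive_vcontinuous _ _ _ Dxi)).
    - exact (continuous_T t Ht).
    - exact (continuous_dot_axis v t (is_vderive_vcontinuous _ _ _ Dv)).
    - exact (continuous_G t Ht). }
  assert (Hnz : forall t, in_I a b t -> h t <> 0).
  { intros t Ht. rewrite (Hh t Ht).
    pose proof (sqrt_sum_sqr_pos _ _ (GT_neq0 t Ht)) as HN.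
    pose proof (axis_coeff_sqr t Ht) as Hsqr.
    apply Rmult_integral_contrapositive. split; [|lra].
    intro Z. rewrite Z in Hsqr. apply S0. nra. }
  pose proof (continuous_nonzero_sign_const a b h Hcont Hnz s0 s Hs0 Hs) as Hsign.
  rewrite (Hh s0 Hs0), (Hh s Hs) in Hsign.
  assert (HN : 0 < sqrt (G s0 ^ 2 + T s0 ^ 2) * sqrt (G s ^ 2 + T s ^ 2)).
  { apply Rmult_lt_0_compat; apply sqrt_sum_sqr_pos, GT_neq0; assumption. }
  assert (Hpos : 0 < axis_coeff s0 * axis_coeff s).
  { destruct (Rlt_or_le 0 (axis_coeff s0 * axis_coeff s)) as [P|P]; [exact P|nra]. }
  assert (Hsq : (axis_coeff s - axis_coeff s0) * (axis_coeff s + axis_coeff s0) = 0).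
  { pose proof (axis_coeff_sqr s0 Hs0). pose proof (axis_coeff_sqr s Hs). nra. }
  apply Rmult_integral in Hsq as [Hsq|Hsq]; nra.
Qed.

Lemma axis_coeff_const :
  exists c, c ^ 2 = sin eta ^ 2 /\ forall s, in_I a b s -> axis_coeff s = c.
Proof.
  destruct (Req_dec (sin eta) 0) as [S0|S0].
  - exists 0. split; [rewrite S0; ring|].
    intros s Hs. pose proof (axis_coeff_sqr s Hs) as Hsqr. rewrite S0 in Hsqr. nra.
  - destruct (classic (exists s0, in_I a b s0)) as [[s0 Hs0]|Hempty].
    + exists (axis_coeff s0). split; [exact (axis_coeff_sqr s0 Hs0)|].
      intros s Hs. exact (axis_coeff_eq s0 s S0 Hs0 Hs).
    + exists (sin eta). split; [reflexivity|].
      intros s Hs. exfalso. exact (Hempty (ex_intro _ s Hs)).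
Qed.

Lemma helix_axis_expansion :
  exists c, c ^ 2 = sin eta ^ 2 /\ forall s, in_I a b s ->
    d = vadd (vadd
          (vscale (c * (T s / sqrt (G s ^ 2 + T s ^ 2))) (xi s))
          (vscale (cos eta) (mu s)))
          (vscale (c * (G s / sqrt (G s ^ 2 + T s ^ 2))) (v s)).
Proof.
  destruct axis_coeff_const as [c [Hc Hconst]].
  exists c. split; [exact Hc|]. intros s Hs.
  destruct (proportional_decomposition (G s) (T s) (dot d (xi s)) (dot d (v s))
              (GT_neq0 s Hs) (helix_axis_orth s Hs)) as [Hxi [Hv _]].
  change (dot d (xi s) = axis_coeff s * (T s / sqrt (G s ^ 2 + T s ^ 2))) in Hxi.
  change (dot d (v s) = axis_coeff s * (G s / sqrt (G s ^ 2 + T s ^ 2))) in Hv.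
  rewrite (Hconst s Hs) in Hxi, Hv.
  rewrite (helix_axis_decomposition s Hs) at 1. rewrite Hxi, Hv. reflexivity.
Qed.

End MuHelix.

Theorem corollary18 (a b : Rbar) (C xi mu v : R -> vec) (G K T : R -> R)
  (d : vec) (eta : R) :
  myller_config a b C xi mu v G K T ->
  (forall s, in_I a b s -> (G s, T s) <> (0, 0)) ->
  mu_helix a b mu d eta ->
  exists eps : R, (eps = 1 \/ eps = -1) /\
    forall s, in_I a b s ->
      d = vadd (vadd
            (vscale (- eps * sin eta * (T s / sqrt (G s ^ 2 + T s ^ 2))) (xi s))
            (vscale (cos eta) (mu s)))
            (vscale (- eps * sin eta * (G s / sqrt (G s ^ 2 + T s ^ 2))) (v s)).
Proof.
  intros config GT_neq0 helix.
  destruct (helix_axis_expansion a b C xi mu v G K T d eta config GT_neq0 helix)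
    as [c [Hc Hd]].
  destruct (sqr_eq_sign c (sin eta) Hc) as [eps [Heps ->]].
  exists eps. split; [exact Heps | exact Hd].
Qed.
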